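(* Let $q$ be a prime power, $r\ge 1$ an integer, and $\mathcal{S}$ a $q^r$-divisible spanning set of $q^{r+1}$ points in $\mathrm{PG}(v-1,q)$. Let $K$ be a subspace of codimension $2$ (i.e. a $(v-2)$-space) with $|\mathcal{S}\cap K|=kq^{r-1}$ for some integer $0<k<q$. Then every hyperplane $H$ containing $K$ satisfies $|\mathcal{S}\cap H|\le kq^r$.
   Context: $\mathrm{PG}(v-1,q)$ is the projective space of $\mathbb{F}_q^v$; a $k$-space is a $k$-dimensional subspace of $\mathbb{F}_q^v$ (points are $1$-spaces, hyperplanes $(v-1)$-spaces). A set $\mathcal{S}$ of points is spanning if its points span $\mathbb{F}_q^v$, and it is $q^r$-divisible if $|\mathcal{S}\cap H|\equiv|\mathcal{S}|\pmod{q^r}$ for every hyperplane $H$. *)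

From HB Require Import structures.
From mathcomp Require Import all_boot all_order all_algebra all_field.
Set Implicit Arguments. Unset Strict Implicit. Unset Printing Implicit Defensive.
Import GRing.Theory.

(* Subspaces of F^v are represented by (row spaces of) square matrices
   'M[F]_v, using mxalgebra. A point (1-space) is represented canonically by
   a rank-1 matrix P with <<P>> = P, so distinct points are distinct matrices. *)
Section PG.
Variables (F : finFieldType) (v : nat).

Definition is_point (P : 'M[F]_v) : bool := (\rank P == 1%N) && (<<P>>%MS == P).

Definition pts_in (S : {set 'M[F]_v}) (U : 'M[F]_v) : {set 'M[F]_v} :=
  [set P in S | (P <= U)%MS].

Definition point_set (S : {set 'M[F]_v}) : Prop := forall P, P \in S -> is_point P.

Definition spanning (S : {set 'M[F]_v}) : Prop :=
  \rank (\sum_(P in S) P)%MS = v.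

Definition divisible (m : nat) (S : {set 'M[F]_v}) : Prop :=
  forall H : 'M[F]_v, \rank H = v.-1 -> #|pts_in S H| = #|S| %[mod m].
End PG.

From mathcomp Require Import all_boot all_order all_algebra all_field.
From mathcomp Require Import zify.
Set Implicit Arguments. Unset Strict Implicit. Unset Printing Implicit Defensive.
Import GRing.Theory.

(* Let q = |F|, m = |S ∩ K| = k q^(r-1) and d = q^r.  The
   subspace K of codimension 2 lies in exactly q+1 hyperplanes, and any two
   of them meet exactly in K; we only need q+1 such hyperplanes, one of them
   the given H, which we build explicitly as a "pencil" through K.  Since
   |S| = q d, divisibility gives d | |S ∩ H'| for every hyperplane H', and as
   H' ⊇ K contains m > 0 points of S, |S ∩ H'| >= d.  The sets (S ∩ H') \ K
   are pairwise disjoint subsets of S, so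
       (|S ∩ H| - m) + q (d - m) <= |S| = q d,
   i.e. |S ∩ H| <= (q+1) m = k d + k q^(r-1) < (k+1) d, and d | |S ∩ H|
   forces |S ∩ H| <= k d. *)

Section RankFacts.
Variable F : fieldType.

Lemma rank_adds_notin n m (A : 'M[F]_(m, n)) (x : 'rV[F]_n) :
  ~~ (x <= A)%MS -> \rank (A + x)%MS = (\rank A).+1.
Proof.
move=> xA; have [le _] := mxrank_adds_leqif A x.
have lt : (\rank A < \rank (A + x)%MS)%N.
  apply: rank_ltmx; rewrite ltmxE addsmxSl /=.
  by apply: contra xA; apply: submx_trans (addsmxSr A x).
by have := rank_leq_row x; lia.
Qed.

Lemma exists_row_notin m1 m2 n (A : 'M[F]_(m1, n)) (B : 'M[F]_(m2, n)) :
  (\rank B < \rank A)%N -> exists i, ~~ (row i A <= B)%MS.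
Proof.
move=> ltBA; apply/existsP; apply: contraLR ltBA; rewrite negb_exists.
move=> /forallP allB; rewrite -leqNgt; apply: mxrankS.
by apply/row_subP => i; have := allB i; rewrite negbK.
Qed.

Lemma hyperplanes_cap_sub n (A B K : 'M[F]_n) :
  (2 <= n)%N -> \rank A = n.-1 -> \rank B = n.-1 -> \rank (A + B)%MS = n ->
  (K <= A)%MS -> (K <= B)%MS -> \rank K = (n - 2)%N -> (A :&: B <= K)%MS.
Proof.
move=> n2 rA rB rAB sKA sKB rK.
have sK : (K <= A :&: B)%MS by rewrite sub_capmx sKA sKB.
have := mxrank_sum_cap A B; rewrite rA rB rAB => dim_cap.
by rewrite -(mxrank_leqif_sup sK).2 rK; apply/eqP; lia.
Qed.

End RankFacts.

(* The pencil of hyperplanes through a codimension-2 subspace K: given a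
   hyperplane H ⊇ K, a vector u ∈ H \ K and a vector w ∉ H, the spaces
   K + (w + c u), c ∈ F, together with H form |F| + 1 hyperplanes through K,
   any two of which meet in K. *)
Section Pencil.
Variables (F : fieldType) (v : nat) (K H : 'M[F]_v) (u w : 'rV[F]_v).
Hypotheses (v2 : (2 <= v)%N) (rK : \rank K = (v - 2)%N) (rH : \rank H = v.-1).
Hypotheses (sKH : (K <= H)%MS) (uH : (u <= H)%MS) (uK : ~~ (u <= K)%MS).
Hypothesis wH : ~~ (w <= H)%MS.
Local Open Scope ring_scope.

Definition pencil_vec (c : F) : 'rV[F]_v := w + c *: u.

Definition pencil (o : option F) : 'M[F]_v :=
  if o is Some c then (K + pencil_vec c)%MS else H.

Lemma pencil_vecK (c : F) : pencil_vec c - c *: u = w.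
Proof. exact: addrK. Qed.

Lemma hyperplane_sub_Ku : (H <= K + u)%MS.
Proof.
have sKu : (K + u <= H)%MS by rewrite addsmx_sub sKH uH.
by rewrite -(mxrank_leqif_sup sKu).2 rank_adds_notin // rK rH; apply/eqP; lia.
Qed.

Lemma span_Kuw_full (T : 'M[F]_v) :
  (K <= T)%MS -> (u <= T)%MS -> (w <= T)%MS -> \rank T = v.
Proof.
move=> KT uT wT.
have sHw : (H + w <= T)%MS.
  rewrite addsmx_sub wT andbT; apply: submx_trans hyperplane_sub_Ku _.
  by rewrite addsmx_sub KT uT.
have := mxrankS sHw; rewrite rank_adds_notin // rH.
by have := rank_leq_col T; lia.
Qed.

Lemma pencil_vec_notinK (c : F) : ~~ (pencil_vec c <= K)%MS.
Proof.
apply: contra wH => xK; rewrite -(pencil_vecK c); apply: addmx_sub.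
  exact: submx_trans xK sKH.
by rewrite -scaleNr scalemx_sub.
Qed.

Lemma pencil_rank o : \rank (pencil o) = v.-1.
Proof.
by case: o => [c|] //=; rewrite rank_adds_notin ?pencil_vec_notinK // rK; lia.
Qed.

Lemma pencil_subK o : (K <= pencil o)%MS.
Proof. by case: o => [c|] //=; rewrite addsmxSl. Qed.

Lemma pencil_adds_full o1 o2 : o1 != o2 -> \rank (pencil o1 + pencil o2)%MS = v.
Proof.
wlog [c ->] : o1 o2 / exists c, o1 = Some c.
  move=> gen; case: o1 => [c|]; first exact: (gen _ _ (ex_intro _ c erefl)).
  case: o2 => [c|] // _; rewrite addsmxC; exact: (gen _ _ (ex_intro _ c erefl)).
set T := (_ + _)%MS => neq.
have KT : (K <= T)%MS := submx_trans (addsmxSl K _) (addsmxSl _ _).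
have xT : (pencil_vec c <= T)%MS := submx_trans (addsmxSr K _) (addsmxSl _ _).
suff uT : (u <= T)%MS.
  apply: span_Kuw_full => //.
  by rewrite -(pencil_vecK c); apply: addmx_sub => //; rewrite -scaleNr scalemx_sub.
case: o2 neq @T KT xT => [d|] neq T KT xT; last first.
  exact: submx_trans uH (addsmxSr _ _).
have yT : (pencil_vec d <= T)%MS := submx_trans (addsmxSr K _) (addsmxSr _ _).
have cd : c - d != 0 by rewrite subr_eq0; apply: contraNneq neq => ->.
have -> : u = (c - d)^-1 *: (pencil_vec c - pencil_vec d).
  by rewrite /pencil_vec opprD addrACA subrr add0r -scalerBl scalerA mulVf ?scale1r.
by rewrite scalemx_sub //; apply: addmx_sub => //; rewrite -scaleN1r scalemx_sub.
Qed.

Lemma pencil_cap o1 o2 : o1 != o2 -> (pencil o1 :&: pencil o2 <= K)%MS.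
Proof.
move=> neq; apply: hyperplanes_cap_sub; rewrite ?pencil_rank ?pencil_subK //.
exact: pencil_adds_full.
Qed.

End Pencil.

Section Counting.
Variables (I T : finType).

Lemma sum_card_disjoint_le (S : {set T}) (D : I -> {set T}) :
  (forall i, D i \subset S) ->
  (forall i j, i != j -> [disjoint D i & D j]) ->
  (\sum_i #|D i| <= #|S|)%N.
Proof.
move=> DS disjD.
have cardE (A : {set T}) : #|A| = (\sum_x (x \in A))%N.
  by rewrite -sum1_card big_mkcond.
rewrite (eq_bigr _ (fun i _ => cardE (D i))) exchange_big cardE.
apply: leq_sum => x _; have [i xDi|noD] := pickP (fun i => x \in D i).
  rewrite (bigD1 i) //= xDi (subsetP (DS i)) // big1 // => j ji.
  by rewrite (disjointFl (disjD _ _ ji) xDi).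
by rewrite big1 // => i _; rewrite noD.
Qed.

(* If sets A i all contain B, lie in S and pairwise meet only inside B, the
   parts outside B are disjoint, so their sizes add up to at most |S|. *)
Lemma sum_card_excess_le (S B : {set T}) (A : I -> {set T}) :
  (forall i, B \subset A i) -> (forall i, A i \subset S) ->
  (forall i j, i != j -> A i :&: A j \subset B) ->
  (\sum_i (#|A i| - #|B|) <= #|S|)%N.
Proof.
move=> BA AS capAB.
rewrite (eq_bigr (fun i => #|A i :\: B|)) => [|i _]; last first.
  by rewrite cardsD (setIidPr (BA i)).
apply: sum_card_disjoint_le => [i|i j ij].
  exact: subset_trans (subsetDl _ _) (AS i).
apply/pred0P => x /=; apply/andP => -[/setDP[xAi xnB] /setDP[xAj _]].
by move/negP: xnB; apply; apply: (subsetP (capAB _ _ ij)); rewrite inE xAi xAj.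
Qed.

Lemma sum_option_ge (f : option I -> nat) (b : nat) :
  (forall c, b <= f (Some c))%N -> (f None + #|I| * b <= \sum_o f o)%N.
Proof.
move=> fb; rewrite (bigD1 None) //= leq_add2l.
have cardI : #|predC1 (None : option I)| = #|I| by rewrite cardC1 card_option.
rewrite -cardI -sum_nat_const.
by apply: leq_sum => [[c|]] //= _.
Qed.

End Counting.

Lemma dvdn_leq_mul d n k : (d %| n)%N -> (n < k.+1 * d)%N -> (n <= k * d)%N.
Proof.
by case/dvdnP => a ->; rewrite ltn_mul2r ltnS leq_mul2r => /andP[_ ->]; rewrite orbT.
Qed.

(* The closing arithmetic: with d = q Q and m = k Q < d, the counting bound
   (n - m) + q (d - m) <= q d gives n < (k+1) d, hence n <= k d when d | n. *)
Lemma pencil_arith (q Q k n : nat) : (0 < Q)%N -> (k < q)%N -> (q * Q %| n)%N ->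
  ((n - k * Q) + q * (q * Q - k * Q) <= q * (q * Q))%N -> (n <= k * (q * Q))%N.
Proof.
move=> Q0 kq dvd le_count; apply: dvdn_leq_mul dvd _.
have : (k * Q < q * Q)%N by rewrite ltn_mul2r Q0.
nia.
Qed.

Section PointsInSubspaces.
Variables (F : finFieldType) (v : nat) (S : {set 'M[F]_v}).

Lemma pts_in_subS (U : 'M[F]_v) : pts_in S U \subset S.
Proof. by apply/subsetP => P; rewrite inE => /andP[]. Qed.

Lemma pts_in_sub (U U' : 'M[F]_v) : (U <= U')%MS -> pts_in S U \subset pts_in S U'.
Proof.
move=> sUU'; apply/subsetP => P; rewrite !inE => /andP[-> PU] /=.
exact: submx_trans PU sUU'.
Qed.

Lemma pts_in_cap (U U' W : 'M[F]_v) :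
  (U :&: U' <= W)%MS -> pts_in S U :&: pts_in S U' \subset pts_in S W.
Proof.
move=> sW; apply/subsetP => P; rewrite !inE => /andP[/andP[-> PU] /andP[_ PU']].
by apply: submx_trans sW; rewrite sub_capmx PU PU'.
Qed.

Lemma divisible_hyperplane_dvd (d : nat) (H : 'M[F]_v) :
  divisible d S -> (d %| #|S|)%N -> \rank H = v.-1 -> (d %| #|pts_in S H|)%N.
Proof. by move=> divS dS rH; rewrite /dvdn (divS H rH). Qed.

Lemma family_point_count (I : finType) (K : 'M[F]_v) (Hs : I -> 'M[F]_v) :
  (forall i, (K <= Hs i)%MS) -> (forall i j, i != j -> (Hs i :&: Hs j <= K)%MS) ->
  (\sum_i (#|pts_in S (Hs i)| - #|pts_in S K|) <= #|S|)%N.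
Proof.
move=> KHs capHs; apply: sum_card_excess_le => [i|i|i j ij].
- exact: pts_in_sub.
- exact: pts_in_subS.
- exact: pts_in_cap (capHs _ _ ij).
Qed.

End PointsInSubspaces.

Theorem lemma1 (F : finFieldType) (v r k : nat) (S : {set 'M[F]_v})
  (K : 'M[F]_v) :
  (2 <= v)%N -> (1 <= r)%N ->
  point_set S -> spanning S -> divisible (#|F| ^ r) S ->
  #|S| = (#|F| ^ r.+1)%N ->
  \rank K = (v - 2)%N ->
  (0 < k)%N -> (k < #|F|)%N ->
  #|pts_in S K| = (k * #|F| ^ r.-1)%N ->
  forall H : 'M[F]_v, \rank H = v.-1 -> (K <= H)%MS ->
    (#|pts_in S H| <= k * #|F| ^ r)%N.
Proof.
move=> v2 r1 _ _ divS cardS rK k0 kq cardK H rH sKH.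
have q0 : (0 < #|F|)%N by apply/card_gt0P; exists 0%R.
have dS : (#|F| ^ r %| #|S|)%N by rewrite cardS expnS dvdn_mull.
have [iu uK] : exists i, ~~ (row i H <= K)%MS by apply: exists_row_notin; lia.
have [iw wH] : exists i, ~~ (row i (1%:M : 'M[F]_v) <= H)%MS.
  by apply: exists_row_notin; rewrite mxrank1; lia.
have uH := row_sub iu H.
pose Hs := pencil K H (row iu H) (row iw 1%:M).
have rHs o : \rank (Hs o) = v.-1 := pencil_rank v2 rK rH sKH uH uK wH o.
have KHs o : (K <= Hs o)%MS := pencil_subK (row iu H) (row iw 1%:M) sKH o.
have count := family_point_count S KHs (pencil_cap v2 rK rH sKH uH uK wH).
have geHs o : (#|F| ^ r <= #|pts_in S (Hs o)|)%N.
  apply: dvdn_leq; last exact: divisible_hyperplane_dvd (rHs o).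
  apply: leq_trans (subset_leq_card (pts_in_sub S (KHs o))).
  by rewrite cardK muln_gt0 k0 expn_gt0 q0.
have le_count := leq_trans (@sum_option_ge _
  (fun o => #|pts_in S (Hs o)| - #|pts_in S K|)%N _
  (fun c => leq_sub2r _ (geHs (Some c)))) count.
have expr : (#|F| ^ r = #|F| * #|F| ^ r.-1)%N by rewrite -expnS prednK.
rewrite expr; apply: pencil_arith => //; first by rewrite expn_gt0 q0.
  by rewrite -expr (divisible_hyperplane_dvd divS dS rH).
by move: le_count; rewrite cardS cardK expnS expr.
Qed.
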